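(* Let $X=\{0,1\}^{\mathbb Z}$, $\mu=(\tfrac12,\tfrac12)^{\mathbb Z}$, $T$ the two-sided shift, and $d(x,x')=\sum_{k\in\mathbb Z}2^{-|k|-2}|x_k-x'_k|$. Consider $\mathbf X=\mathbf Y=(X,d,\mu,T)$ and choose dense anchor families in $X$ whose first anchor, in both coordinates, is the all-zero sequence $0^\infty$. Then for every $p\ge1$, $\widetilde{\mathrm{Dep}}_{1,1,1,p}(\mathbf X,\mathbf Y)>0$.
   Context: $\mathcal J(T,T)$: Borel probability measures on $X\times X$ with both marginals $\mu$ invariant under $T\times T$. With anchors $(a_r)$, $(b_r)$, for $z_i=(x_i,y_i)$: $\widetilde{\mathcal D}^X_{n,m,R}=\bigl((d(T^ax_i,T^bx_j))_{1\le i,j\le n,0\le a,b<m},(d(T^ax_i,a_r))_{1\le i\le n,0\le a<m,1\le r\le R}\bigr)$, $\widetilde{\mathcal D}^Y_{n,m,R}$ analogously with $y_i$ and $b_r$, $\widetilde\Phi_{n,m,R}(\lambda)=\mathrm{Law}_{\lambda^{\otimes n}}(\widetilde{\mathcal D}^X_{n,m,R},\widetilde{\mathcal D}^Y_{n,m,R})$, and $\widetilde{\mathrm{Dep}}_{n,m,R,p}(\mathbf X,\mathbf Y)=\sup_{\lambda\in\mathcal J(T,T)}W_p(\widetilde\Phi_{n,m,R}(\lambda),\widetilde\Phi_{n,m,R}(\mu\otimes\mu))$, where $W_p$ is the $p$-Wasserstein distance on the finite array cube with a fixed product Euclidean metric. *)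

From HB Require Import structures.
From mathcomp Require Import all_boot all_order all_algebra.
From mathcomp Require Import all_classical all_reals all_analysis.
Set Implicit Arguments. Unset Strict Implicit. Unset Printing Implicit Defensive.
Import Order.TTheory GRing.Theory Num.Theory.
Local Open Scope classical_set_scope.
Local Open Scope ring_scope.

Definition cylinders : set (set (int -> bool)) :=
  [set A | exists (k : int) (b : bool), A = [set x | x k = b]].

(** X with its product (cylinder) sigma-algebra, which is the Borel
    sigma-algebra of the product topology (= topology of the metric d). *)
Definition X := g_sigma_algebraType cylinders.

Definition Xdisp := (cylinders.-sigma)%mdisp.

Definition shift (x : X) : X := fun k => x (k + 1)%R.

Definition zeroseq : X := fun _ => false.

Definition dX {R : realType} (x x' : X) : R :=
  fine (\esum_(k in [set: int]) ((2%:R ^- (`|k|%N + 2)%N) * (x k != x' k)%:R)%:E)%E.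

Definition is_bernoulli_half {R : realType} (mu : probability X R) : Prop :=
  forall (F : seq int) (v : int -> bool), uniq F ->
    mu [set x : X | forall k, k \in F -> x k = v k] = (2%:R ^- size F)%:E.

(** dense anchor family (a_r)_{r >= 1}, indexed here from 0 *)
Definition dense_family {R : realType} (a : nat -> X) : Prop :=
  forall (x : X) (eps : R), 0 < eps -> exists r, dX x (a r) < eps.

Definition joining {R : realType} (mu : probability X R)
  (lam : probability (X * X)%type R) : Prop :=
  [/\ forall A : set X, measurable A -> lam (A `*` setT) = mu A,
      forall A : set X, measurable A -> lam (setT `*` A) = mu A &
      forall A : set (X * X)%type, measurable A ->
        lam ((fun z : X * X => (shift z.1, shift z.2)) @^-1` A) = lam A].

(** Array space for n = m = R = 1:
    ((d(x,x), d(x,a_1)), (d(y,y), d(y,b_1))). *)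
Definition Arr (R : realType) := ((R * R) * (R * R))%type.

Definition D111 {R : realType} (a b : nat -> X) (z : X * X) : Arr R :=
  ((dX z.1 z.1, dX z.1 (a 0%N)), (dX z.2 z.2, dX z.2 (b 0%N))).

Definition Phi111 {R : realType} (a b : nat -> X)
  (lam : set (X * X)%type -> \bar R) : set (Arr R) -> \bar R :=
  pushforward lam (D111 a b).

Definition arr_dist {R : realType} (u v : Arr R) : R :=
  Num.sqrt ((u.1.1 - v.1.1) ^+ 2 + (u.1.2 - v.1.2) ^+ 2
          + (u.2.1 - v.2.1) ^+ 2 + (u.2.2 - v.2.2) ^+ 2).

Definition coupling {R : realType} (P Q : set (Arr R) -> \bar R)
  (pi : probability (Arr R * Arr R)%type R) : Prop :=
  (forall A : set (Arr R), measurable A -> pi (A `*` setT) = P A) /\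
  (forall B : set (Arr R), measurable B -> pi (setT `*` B) = Q B).

Definition Wass {R : realType} (p : R) (P Q : set (Arr R) -> \bar R) : \bar R :=
  poweR (ereal_inf [set (\int[pi]_w ((arr_dist w.1 w.2) `^ p)%:E)%E
                   | pi in [set pi | coupling P Q pi]]) p^-1.

Definition Dep111 {R : realType} (mu : probability X R) (a b : nat -> X) (p : R)
  : \bar R :=
  ereal_sup [set Wass p (Phi111 a b lam) (Phi111 a b (mu \x mu)%E)
            | lam in [set lam | joining mu lam]].

From Pilot Require Import Defs.
From HB Require Import structures.
From mathcomp Require Import all_boot all_order all_algebra.
From mathcomp Require Import all_classical all_reals all_analysis.
From mathcomp Require Import zify lra measurable_realfun.
Import Order.TTheory GRing.Theory Num.Theory.
Local Open Scope classical_set_scope.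
Local Open Scope ring_scope.

(** Under the diagonal joining [x = y] the two anchor distances [d(x, 0^oo)]
    and [d(y, 0^oo)] coincide, while under [mu \x mu] they differ by at least
    [1/16] with probability at least [2^-6] (take [x] vanishing on [[-2, 2]] and
    [y_0 = 1]).  Any coupling of the two laws therefore moves mass [2^-6] over a
    distance at least [1/32], so [W_p >= 2^(-6/p) / 32 > 0]. *)

Lemma measure_le_integral {R : realType} {d} {T : measurableType d}
    (m : {measure set T -> \bar R}) (f : T -> R) (I : set T) (k : R) :
  measurable I -> measurable_fun setT f -> (forall x, 0 <= f x) -> 0 <= k ->
  (forall x, I x -> k <= f x) ->
  (k%:E * m I <= \int[m]_x (f x)%:E)%E.
Proof.
move=> mI mf f0 k0 kf.
have -> : (k%:E * m I = \int[m]_x (k * \1_I x)%:E)%E.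
  rewrite (@integralZl_indic _ _ _ m setT measurableT (fun _ => I)) //.
    by rewrite integral_indic // setIT.
  by move=> /lt_le_trans /(_ k0); rewrite ltxx.
apply: ge0_le_integral => //.
- by move=> x _; rewrite lee_fin mulr_ge0.
- exact/measurable_EFinP/measurable_funM.
- exact/measurable_EFinP.
move=> x _; rewrite lee_fin indicE.
by have [/set_mem/kf|_] := boolP (x \in I); rewrite ?mulr1 ?mulr0.
Qed.

Section dyadic_sums.
Context {R : realType}.

Lemma esum_int_split (a : int -> \bar R) :
  (forall k, 0 <= a k)%E ->
  \esum_(k in [set: int]) a k =
    (\sum_(n <oo) a (Posz n) + \sum_(n <oo) a (Negz n))%E.
Proof.
move=> a0; rewrite (esumID [set k : int | 0 <= k]) // setTI.
have -> : [set: int] `&` ~` [set k : int | 0 <= k] = Negz @` [set: nat].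
  apply/seteqP; split => [[n|n] /= [_ //] _|k [n _ <-] //].
  by exists n.
have -> : [set k : int | 0 <= k] = Posz @` [set: nat].
  apply/seteqP; split => [k /= k0|k [n _ <-] //].
  by exists `|k|%N => //; rewrite gez0_abs.
by rewrite !esum_image ?nneseries_esumT // => i j _ _ [].
Qed.

Lemma nneseries_dyadic_tail_le (u : nat -> \bar R) m :
  (forall n, 0 <= u n)%E -> (forall n, (n < m)%N -> u n = 0%E) ->
  (forall n, u n <= (2%:R ^- (n + 2))%:E)%E ->
  (\sum_(n <oo) u n <= (2%:R ^- m.+1)%:E)%E.
Proof.
move=> u0 um ub.
rewrite (nneseries_split 0 m) // add0n big1_seq ?add0e; last first.
  by move=> k; rewrite mem_index_iota => /andP[_ km]; exact: um.
rewrite -nneseries_addn //.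
have /cvg_lim := @cvg_geometric_eseries_half R (2%:R ^- m.+1) 0.
rewrite expr0 divr1 => <- //.
apply: (@lee_nneseries R _ _ xpredT 0) => // n _.
apply: le_trans (ub _) _; rewrite lee_fin natrX -invfM -exprD.
by rewrite (_ : (n + m + 2 = m.+1 + (n + 1))%N) //; lia.
Qed.

Lemma esum_int_dyadic_tail_le (a : int -> \bar R) m :
  (forall k, 0 <= a k)%E -> (forall k, (`|k| < m)%N -> a k = 0%E) ->
  (forall k, a k <= (2%:R ^- (`|k|%N + 2))%:E)%E ->
  (\esum_(k in [set: int]) a k <= (2%:R ^- m.+1 + 2%:R ^- m.-1.+1)%:E)%E.
Proof.
move=> a0 am ab; rewrite esum_int_split // EFinD.
apply: leeD; apply: nneseries_dyadic_tail_le => // n.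
- by move=> nm; apply: am.
- by move=> nm; apply: am => /=; lia.
- apply: le_trans (ab _) _; rewrite lee_fin /= lef_pV2 ?posrE ?exprn_gt0 //.
  by rewrite ler_eXn2l ?ltr1n.
Qed.

End dyadic_sums.

Section distance_to_zeroseq.
Context {R : realType}.

Definition dist0_term (x : X) (k : int) : \bar R :=
  ((2%:R ^- (`|k|%N + 2)) * (x k != zeroseq k)%:R)%:E.

Definition edist0 (x : X) : \bar R := \esum_(k in [set: int]) dist0_term x k.

Lemma dist0_term_ge0 x k : (0 <= dist0_term x k)%E.
Proof. by rewrite lee_fin mulr_ge0. Qed.

Lemma dist0_term_le x k : (dist0_term x k <= (2%:R ^- (`|k|%N + 2))%:E)%E.
Proof. by rewrite lee_fin; case: (x k != zeroseq k); rewrite ?mulr1 ?mulr0. Qed.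

Lemma edist0_le_tail x m : (forall k, (`|k| < m)%N -> x k = false) ->
  (edist0 x <= (2%:R ^- m.+1 + 2%:R ^- m.-1.+1)%:E)%E.
Proof.
move=> xm; apply: esum_int_dyadic_tail_le.
- exact: dist0_term_ge0.
- by move=> k km; rewrite /dist0_term xm // mulr0.
- exact: dist0_term_le.
Qed.

Lemma edist0_fin_num x : edist0 x \is a fin_num.
Proof.
rewrite ge0_fin_numE; last by apply: esum_ge0 => k _; exact: dist0_term_ge0.
by apply: le_lt_trans (@edist0_le_tail x 0 _) _; rewrite ?ltry.
Qed.

Lemma dX_zeroseqE x : (dX x zeroseq)%:E = edist0 x.
Proof. exact/fineK/edist0_fin_num. Qed.

Lemma dX_zeroseq_le x : (forall k, (`|k| < 3)%N -> x k = false) ->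
  dX x zeroseq <= 3%:R / 16%:R :> R.
Proof.
move=> x0; rewrite -lee_fin dX_zeroseqE.
apply: (le_trans (@edist0_le_tail x 3 x0)); rewrite lee_fin -!exprVn !exprS expr0.
lra.
Qed.

Lemma dX_zeroseq_ge x : x 0 = true -> 4%:R^-1 <= dX x zeroseq :> R.
Proof.
move=> x0; rewrite -lee_fin dX_zeroseqE.
apply: esum_ge; exists [set 0]; first by split => //; exact: finite_set1.
by rewrite fsbig_set1 /dist0_term x0 mulr1 lee_fin -exprVn !exprS expr0; lra.
Qed.

End distance_to_zeroseq.

Lemma measurable_coord (k : int) (b : bool) : measurable [set x : X | x k = b].
Proof. by apply: sub_sigma_algebra; exists k, b. Qed.

Lemma measurable_fun_coord (k : int) : measurable_fun setT (fun x : X => x k).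
Proof. by apply: (measurable_fun_bool true); rewrite setTI; exact: measurable_coord. Qed.

Lemma measurable_edist0 {R : realType} : measurable_fun setT (@edist0 R).
Proof.
have -> : @edist0 R = ((fun x => \sum_(n <oo) dist0_term x (Posz n)) \+
                       (fun x => \sum_(n <oo) dist0_term x (Negz n)))%E.
  by apply/funext => x; rewrite /edist0 esum_int_split //; exact: dist0_term_ge0.
have mterm k : measurable_fun setT (@dist0_term R ^~ k).
  pose g (b : bool) : \bar R := ((2%:R ^- (`|k|%N + 2)) * (b != zeroseq k)%:R)%:E.
  have mg : measurable_fun setT g by [].
  exact: measurableT_comp mg (measurable_fun_coord k).
apply: emeasurable_funD; apply: ge0_emeasurable_sum => // k x _ _;
  exact: dist0_term_ge0.
Qed.

Definition cyl (F : seq int) (v : int -> bool) : set X :=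
  [set x | forall k, k \in F -> x k = v k].

Lemma measurable_cyl F v : measurable (cyl F v).
Proof.
elim: F => [|k F ih].
  by rewrite (_ : cyl [::] v = setT) //; apply/seteqP; split => x //= _ k.
rewrite (_ : cyl (k :: F) v = [set x | x k = v k] `&` cyl F v).
  exact: measurableI (measurable_coord _ _) ih.
apply/seteqP; split => x /= h.
  by split => [|j jF]; apply: h; rewrite inE ?eqxx ?jF ?orbT.
by move=> j; rewrite inE => /orP[/eqP->|]; [case: h|case: h => _; apply].
Qed.

Definition cyl_sets : set (set X) :=
  [set A | A = set0 \/ exists F v, uniq F /\ A = cyl F v].

Lemma measurable_cyl_setsE : @measurable _ X = <<s cyl_sets >>.
Proof.
apply/seteqP; split.
  apply: smallest_sub; first exact: smallest_sigma_algebra.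
  move=> _ [k [b ->]]; apply: sub_sigma_algebra; right.
  exists [:: k], (fun _ => b); split => //; apply/seteqP; split => x /=.
    by move=> h j; rewrite inE => /eqP->.
  by apply; rewrite mem_head.
apply: smallest_sub; first exact: sigma_algebra_measurable.
by move=> A [->|[F [v [_ ->]]]]; [exact: measurable0|exact: measurable_cyl].
Qed.

Lemma setI_closed_cyl_sets : setI_closed cyl_sets.
Proof.
move=> A B [->|[F1 [v1 [u1 ->]]]]; first by left; rewrite set0I.
move=> [->|[F2 [v2 [u2 ->]]]]; first by left; rewrite setI0.
have [[k [kF1 kF2 kv]]|nc] :=
  pselect (exists k, [/\ k \in F1, k \in F2 & v1 k != v2 k]).
  left; apply/seteqP; split => x //= [h1 h2].
  by move: kv; rewrite -(h1 _ kF1) -(h2 _ kF2) eqxx.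
right; exists (undup (F1 ++ F2)), (fun k => if k \in F1 then v1 k else v2 k).
split; first exact: undup_uniq.
apply/seteqP; split => x /=.
  move=> [h1 h2] k; rewrite mem_undup mem_cat.
  by case: ifP => kF1 /= => [_|]; [exact: h1|exact: h2].
move=> h; split => k kF.
  by have := h k; rewrite mem_undup mem_cat kF /=; apply.
have := h k; rewrite mem_undup mem_cat kF orbT => /(_ isT).
case: ifP => // kF1 ->; apply/eqP; apply: contra_notT nc => nv.
by exists k; split => //; rewrite eq_sym.
Qed.

Lemma measurable_shift : measurable_fun setT Defs.shift.
Proof.
apply: (@measurability _ _ X X setT Defs.shift cylinders) => //.
by move=> _ [_ [k [b ->]] <-]; rewrite setTI; exact: measurable_coord.
Qed.

HB.instance Definition _ := isMeasurableFun.Build _ _ _ _ Defs.shift measurable_shift.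

Lemma preimage_shift_cyl F v :
  Defs.shift @^-1` cyl F v = cyl (map (fun k => k + 1) F) (fun j => v (j - 1)).
Proof.
apply/seteqP; split => x /= h.
  by move=> j /mapP[k kF ->]; rewrite addrK; exact: h.
by move=> k kF; have := h (k + 1); rewrite addrK; apply; apply/mapP; exists k.
Qed.

Lemma bernoulli_half_shift_invariant {R : realType} (mu : probability X R) :
  is_bernoulli_half mu ->
  forall A, measurable A -> mu (Defs.shift @^-1` A) = mu A.
Proof.
move=> hb A mA.
apply: (@measure_unique _ R X cyl_sets (fun _ => setT) measurable_cyl_setsE
  setI_closed_cyl_sets _ _ (distribution mu Defs.shift) mu) => //.
- move=> _; right; exists [::], (fun _ => false); split => //.
  by apply/seteqP; split => x //= _ k.
- by apply/seteqP; split => x // _; exists 0%N.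
- move=> _ [->|[F [v [uF ->]]]]; first by rewrite !measure0.
  change (mu (Defs.shift @^-1` cyl F v) = mu (cyl F v)).
  rewrite preimage_shift_cyl !hb ?size_map //.
  by rewrite map_inj_uniq // => i j; exact: addIr.
- move=> _; change (mu (Defs.shift @^-1` setT) < +oo)%E.
  by rewrite preimage_setT probability_setT ltry.
Qed.

Definition diag (x : X) : (X * X)%type := (x, x).

Lemma measurable_diag : measurable_fun setT diag.
Proof. exact: measurable_fun_pair. Qed.

HB.instance Definition _ := isMeasurableFun.Build _ _ _ _ diag measurable_diag.

Lemma joining_diag {R : realType} (mu : probability X R) :
  is_bernoulli_half mu -> joining mu (distribution mu diag).
Proof.
move=> hb; split => A mA.
- by change (mu (diag @^-1` (A `*` setT)) = mu A); congr (mu _);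
    apply/seteqP; split => x //= [].
- by change (mu (diag @^-1` (setT `*` A)) = mu A); congr (mu _);
    apply/seteqP; split => x //= [].
- change (mu (Defs.shift @^-1` (diag @^-1` A)) = mu (diag @^-1` A)).
  apply: bernoulli_half_shift_invariant => //.
  by rewrite -[X in measurable X]setTI; exact: measurable_diag.
Qed.

Section array_couplings.
Context {R : realType}.
Implicit Types u v : Arr R.

Lemma measurable_arr_dist :
  measurable_fun setT (fun w : (Arr R * Arr R)%type => arr_dist w.1 w.2).
Proof.
apply: (measurableT_comp (continuous_measurable_fun (@sqrt_continuous R))).
apply: measurable_funD; [apply: measurable_funD; [apply: measurable_funD|]|];
  apply: measurable_funX; apply: measurable_funB.
all: by do ![exact: measurable_fst|exact: measurable_snd
  |apply: measurableT_comp measurable_fst _|apply: measurableT_comp measurable_snd _].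
Qed.

Lemma arr_dist_ge12 u v : `|u.1.2 - v.1.2| <= arr_dist u v.
Proof.
rewrite /arr_dist -sqrtr_sqr; apply: ler_wsqrtr.
have := sqr_ge0 (u.1.1 - v.1.1); have := sqr_ge0 (u.2.1 - v.2.1);
have := sqr_ge0 (u.2.2 - v.2.2); lra.
Qed.

Lemma arr_dist_ge22 u v : `|u.2.2 - v.2.2| <= arr_dist u v.
Proof.
rewrite /arr_dist -sqrtr_sqr; apply: ler_wsqrtr.
have := sqr_ge0 (u.1.1 - v.1.1); have := sqr_ge0 (u.2.1 - v.2.1);
have := sqr_ge0 (u.1.2 - v.1.2); lra.
Qed.

Lemma coupling_massX_ge {P Q : set (Arr R) -> \bar R} {A B : set (Arr R)}
    (pi : probability (Arr R * Arr R)%type R) :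
  measurable A -> measurable B -> coupling P Q pi -> P (~` A) = 0%E ->
  (Q B <= pi (A `*` B))%E.
Proof.
move=> mA mB [cP cQ] PA0.
have mAc : measurable (~` A `*` [set: Arr R]).
  by apply: measurableX => //; exact: measurableC.
rewrite -cQ //.
apply: (le_trans (@le_measure _ _ _ pi _ (A `*` B `|` ~` A `*` setT) _ _ _)).
- by rewrite inE; exact: measurableX.
- by rewrite inE; apply: measurableU => //; exact: measurableX.
- by move=> [u v] [_ Bv]; have [Au|Au] := pselect (A u); [left|right].
apply: (le_trans (measureU2 _ _ mAc)); first exact: measurableX.
rewrite [X in (_ + X)%E](_ : _ = 0%E) ?adde0 //.
by rewrite -PA0; apply: cP; exact: measurableC.
Qed.

Lemma coupling_cost_ge {P Q : set (Arr R) -> \bar R} {A B : set (Arr R)}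
    (pi : probability (Arr R * Arr R)%type R) (p delta c : R) :
  measurable A -> measurable B -> 0 <= p -> 0 <= delta ->
  coupling P Q pi -> P (~` A) = 0%E -> (c%:E <= Q B)%E ->
  (forall u v, A u -> B v -> delta <= arr_dist u v) ->
  (((delta `^ p) * c)%:E <= \int[pi]_w ((arr_dist w.1 w.2) `^ p)%:E)%E.
Proof.
move=> mA mB p0 delta0 cpl PA0 cQB gap.
have mAB : measurable (A `*` B) by exact: measurableX.
have mcost := measurableT_comp (measurable_powR p) measurable_arr_dist.
apply: (le_trans _ (measure_le_integral pi (fun w => arr_dist w.1 w.2 `^ p)
  (A `*` B) (delta `^ p) mAB mcost _ (powR_ge0 delta p) _)).
- rewrite EFinM lee_wpmul2l ?lee_fin ?powR_ge0 //.
  exact: (le_trans cQB (coupling_massX_ge pi mA mB cpl PA0)).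
- by move=> w; exact: powR_ge0.
- move=> [u v] [/= Au Bv]; apply: ge0_ler_powR => //; rewrite ?nnegrE //.
    exact: (le_trans delta0 (gap _ _ Au Bv)).
  exact: gap.
Qed.

End array_couplings.

Section anchor_distances.
Context {R : realType}.

Definition anchor_dist_eq : set (Arr R) := [set u | u.1.2 = u.2.2].

Definition anchor_dist_gap : set (Arr R) :=
  [set u | u.1.2 <= 3%:R / 16%:R /\ 4%:R^-1 <= u.2.2].

Let measurable_fun_12 : measurable_fun setT (fun u : Arr R => u.1.2).
Proof. exact: measurableT_comp measurable_snd measurable_fst. Qed.

Let measurable_fun_22 : measurable_fun setT (fun u : Arr R => u.2.2).
Proof. exact: measurableT_comp measurable_snd measurable_snd. Qed.

Lemma measurable_anchor_dist_eq : measurable anchor_dist_eq.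
Proof.
rewrite (_ : anchor_dist_eq = (fun u : Arr R => u.1.2 == u.2.2) @^-1` [set true]).
  rewrite -[X in measurable X]setTI.
  exact: measurable_fun_eqr measurable_fun_12 measurable_fun_22 _ _ _.
by apply/seteqP; split => u /= /eqP.
Qed.

Lemma measurable_anchor_dist_gap : measurable anchor_dist_gap.
Proof.
rewrite (_ : anchor_dist_gap =
    ((fun u : Arr R => u.1.2) @^-1` `]-oo, 3%:R / 16%:R]) `&`
    ((fun u : Arr R => u.2.2) @^-1` `[4%:R^-1, +oo[)).
  apply: measurableI; rewrite -[X in measurable X]setTI.
    exact: measurable_fun_12 _ _ (measurable_itv _).
  exact: measurable_fun_22 _ _ (measurable_itv _).
by apply/seteqP; split => u /=; rewrite !in_itv /= ?andbT.
Qed.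

(* As [v.2.2 - v.1.2 >= 1/16], the common value [u.1.2 = u.2.2] is at least
   [1/32] away from [v.1.2] or from [v.2.2]. *)
Lemma arr_dist_anchor_gap u v :
  anchor_dist_eq u -> anchor_dist_gap v -> 32%:R^-1 <= arr_dist u v.
Proof.
rewrite /anchor_dist_eq /anchor_dist_gap /= => uD [v1 v2].
have h1 := arr_dist_ge12 u v; have h2 := arr_dist_ge22 u v; rewrite uD in h1.
have a1 := ler_norm (u.2.2 - v.1.2).
have a2 := ler_norm (- (u.2.2 - v.2.2)); rewrite normrN in a2.
lra.
Qed.

End anchor_distances.

Lemma Phi111_diag_anchor_dist_eq {R : realType} (mu : probability X R)
    (a b : nat -> X) :
  a 0%N = zeroseq -> b 0%N = zeroseq ->
  Phi111 a b (distribution mu diag) (~` anchor_dist_eq) = 0%E.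
Proof.
move=> a0 b0.
change (mu (diag @^-1` (D111 a b @^-1` (~` @anchor_dist_eq R))) = 0%E).
rewrite (_ : diag @^-1` _ = set0) ?measure0 //.
by apply/seteqP; split => x //=; rewrite /D111 /anchor_dist_eq /= a0 b0; apply.
Qed.

(* The constant is [mu [x = 0 on [-2, 2]] * mu [y_0 = 1]]. *)
Lemma Phi111_prod_anchor_dist_gap {R : realType} (mu : probability X R)
    (a b : nat -> X) :
  is_bernoulli_half mu -> a 0%N = zeroseq -> b 0%N = zeroseq ->
  (((2%:R ^- 5 * 2%:R ^- 1) : R)%:E <=
     Phi111 a b (mu \x mu)%E anchor_dist_gap)%E.
Proof.
move=> hb a0 b0; rewrite /Phi111 /pushforward.
pose S1 := @edist0 R @^-1` `]-oo, (3%:R / 16%:R)%:E]%classic.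
pose S2 := @edist0 R @^-1` `[(4%:R^-1)%:E, +oo[%classic.
have mS1 : measurable S1.
  rewrite -[X in measurable X]setTI.
  exact: measurable_edist0 _ _ (emeasurable_itv _).
have mS2 : measurable S2.
  rewrite -[X in measurable X]setTI.
  exact: measurable_edist0 _ _ (emeasurable_itv _).
have -> : @D111 R a b @^-1` anchor_dist_gap = S1 `*` S2.
  apply/seteqP; split => -[x y]; rewrite /D111 /anchor_dist_gap /S1 /S2 /=;
    by rewrite !in_itv /= a0 b0 -!dX_zeroseqE !lee_fin ?andbT.
rewrite product_measure1E // EFinM; apply: lee_pmul => //.
- rewrite -(hb [:: -2; -1; 0; 1; 2] (fun _ => false)) //.
  apply: le_measure; rewrite ?inE //; first exact: measurable_cyl.
  move=> x /= x0; rewrite /S1 /= in_itv /= -dX_zeroseqE lee_fin.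
  apply: dX_zeroseq_le => k k3; apply: x0.
  by move: k k3 => [[|[|[|?]]]|[|[|?]]].
- rewrite -(hb [:: 0] (fun _ => true)) //.
  apply: le_measure; rewrite ?inE //; first exact: measurable_cyl.
  move=> x /= x0; rewrite /S2 /= in_itv /= andbT -dX_zeroseqE lee_fin.
  by apply: dX_zeroseq_ge; apply: x0; rewrite mem_head.
Qed.

Theorem proposition22 (R : realType) (mu : probability X R)
  (a b : nat -> X) (p : R) :
  is_bernoulli_half mu ->
  dense_family (R := R) a -> dense_family (R := R) b ->
  a 0%N = zeroseq -> b 0%N = zeroseq ->
  1 <= p ->
  (0 < Dep111 mu a b p)%E.
Proof.
move=> hb _ _ a0 b0 p1.
have p0 : 0 <= p by lra.
apply: (lt_le_trans _ (ereal_sup_ubound _)); last first.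
  by exists (distribution mu diag) => //; exact: joining_diag.
apply: poweR_gt0.
pose c : R := 2%:R ^- 5 * 2%:R ^- 1.
apply: (@lt_le_trans _ _ ((32%:R^-1 `^ p * c)%:E)).
  by rewrite lte_fin mulr_gt0 ?powR_gt0 // mulr_gt0.
apply: le_ereal_inf_tmp => _ [pi /= cpl <-].
apply: (coupling_cost_ge pi p (32%:R^-1) c measurable_anchor_dist_eq
  measurable_anchor_dist_gap p0 _ cpl).
- by rewrite invr_ge0.
- exact: Phi111_diag_anchor_dist_eq.
- exact: Phi111_prod_anchor_dist_gap.
- exact: arr_dist_anchor_gap.
Qed.
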